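(* There exists a quantum algorithm which, given the value $a>0$ of the initial success probability of $\mathcal A$, outputs a basis element $z$ with $\chi(z)=1$ with certainty (probability $1$), using a number of applications of $\mathcal A$ and $\mathcal A^{-1}$ (together with $\mathbf S_\chi$, $\mathbf S_0$-type phase operators and auxiliary gates not depending on $\chi$ or $\mathcal A$) that is in $\Theta(1/\sqrt a)$ in the worst case.
   Context: Let $\mathcal H$ be a finite-dimensional Hilbert space with a fixed orthonormal computational basis $\{|x\rangle\}$ indexed by a finite set of nonnegative integers containing $0$. Let $\chi:\mathbb Z\to\{0,1\}$ be a Boolean function; a basis state $|x\rangle$ is good if $\chi(x)=1$. For a state $|\Upsilon\rangle$, let $|\Upsilon_1\rangle$ be its orthogonal projection onto the span of the good basis states. Let $\mathcal A$ be a unitary on $\mathcal H$ (a quantum algorithm using no measurements), $|\Psi\rangle=\mathcal A|0\rangle$, and $a=\langle\Psi_1|\Psi_1\rangle$ its initial success probability. *)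

From mathcomp Require Import all_boot all_algebra.
From mathcomp Require Import reals complex spectral.
Set Implicit Arguments. Unset Strict Implicit. Unset Printing Implicit Defensive.
Import GRing.Theory Num.Theory.
Local Open Scope ring_scope.

Section QAlg.
Variable R : realType.
Local Notation C := (R[i]).

(* Hilbert space H = C^(n+1), computational basis |x>, x : 'I_(n.+1), |0> = ord0.
   A state is a column vector. *)
Definition ket0 (n : nat) : 'cV[C]_(n.+1) := delta_mx ord0 0.

Definition good_prob (n : nat) (chi : int -> bool) (psi : 'cV[C]_(n.+1)) : C :=
  \sum_(x < n.+1 | chi (nat_of_ord x)%:Z) `|psi x 0| ^+ 2.

Definition S_chi (n : nat) (chi : int -> bool) (phi : C) : 'M[C]_(n.+1) :=
  diag_mx (\row_(x < n.+1) if chi (nat_of_ord x)%:Z then phi else 1).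

Definition S_0 (n : nat) (phi : C) : 'M[C]_(n.+1) :=
  diag_mx (\row_(x < n.+1) if x == ord0 then phi else 1).

(* Gates available to the algorithm. Aux gates are explicit matrices chosen by
   the algorithm, hence independent of chi and A. *)
Inductive gate (n : nat) : Type :=
  | GA : gate n
  | GAinv : gate n
  | GSchi : C -> gate n
  | GS0 : C -> gate n
  | GAux : 'M[C]_(n.+1) -> gate n.

Definition gate_ok (n : nat) (g : gate n) : Prop :=
  match g with
  | GA | GAinv => True
  | GSchi phi | GS0 phi => `|phi| = 1
  | GAux U => U \is unitarymx
  end.

Fixpoint circuit_ok (n : nat) (s : seq (gate n)) : Prop :=
  match s with
  | [::] => True
  | g :: s' => gate_ok g /\ circuit_ok s'
  end.

Definition gate_mx (n : nat) (chi : int -> bool) (A : 'M[C]_(n.+1)) (g : gate n)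
  : 'M[C]_(n.+1) :=
  match g with
  | GA => A
  | GAinv => invmx A
  | GSchi phi => S_chi n chi phi
  | GS0 phi => S_0 n phi
  | GAux U => U
  end.

(* Run the circuit (gates applied left to right, first gate first) on psi. *)
Fixpoint run (n : nat) (chi : int -> bool) (A : 'M[C]_(n.+1)) (s : seq (gate n))
  (psi : 'cV[C]_(n.+1)) : 'cV[C]_(n.+1) :=
  match s with
  | [::] => psi
  | g :: s' => run chi A s' (gate_mx chi A g *m psi)
  end.

Definition cost (n : nat) (s : seq (gate n)) : nat :=
  count (fun g => match g with GA | GAinv => true | _ => false end) s.

End QAlg.

(* Amplitude amplification with an exact last step.  Write A|0> = psi1 + psi0, where
   psi1 is the good part, of weight a = sin^2 theta.  A Grover block, S_chi(ph1) followed
   by A S_0(ph2) A^-1, leaves the plane spanned by psi1 and psi0 invariant; for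
   ph1 = ph2 = -1 it acts there, up to sign, as the rotation by 2 theta, so k standard
   blocks reach the angle (2k+1) theta.  Stop before this angle exceeds pi/2: while it
   does not, sin - cos grows by at least 2 sin theta / 3 per block, so k < 3 / sqrt a,
   and cos drops by at most 2 sin theta per block, so k + 1 >= cos theta / (2 sqrt a).
   The remaining angle is at most 2 theta, and a single block with tuned phases then
   cancels the bad amplitude exactly; by unitarity the final state is good with
   probability 1.  Counting the initial A, the cost is 2k + 3 = Theta(1 / sqrt a). *)

From mathcomp Require Import all_boot all_algebra.
From mathcomp Require Import reals complex spectral.
From mathcomp Require Import all_order ring lra.
Import Order.TTheory GRing.Theory Num.Theory.
Set Implicit Arguments. Unset Strict Implicit. Unset Printing Implicit Defensive.
Local Open Scope ring_scope.
Local Open Scope complex_scope.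

Section AmplitudeDynamics.
Variable R : realType.
Local Notation C := R[i].

(* New amplitudes of amp.1 psi1 + amp.2 psi0 after the block S_chi(ph.1), A S_0(ph.2) A^-1,
   where A|0> = psi1 + psi0 and a is the weight of psi1; g is the overlap of A|0>
   with the intermediate state. *)
Definition grover_step (a : R) (ph amp : C * C) : C * C :=
  let g := ph.1 * amp.1 * a%:C + amp.2 * (1 - a)%:C in
  (ph.1 * amp.1 + (ph.2 - 1) * g, amp.2 + (ph.2 - 1) * g).

Definition grover_run (a : R) (L : seq (C * C)) (amp : C * C) : C * C :=
  foldl (fun amp ph => grover_step a ph amp) amp L.

Definition unit_phase (ph : C * C) : bool := (`|ph.1| == 1) && (`|ph.2| == 1).

Lemma grover_run_rcons_nseq a k p q amp :
  grover_run a (rcons (nseq k p) q) amp =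
  grover_step a q (iter k (grover_step a p) amp).
Proof.
rewrite /grover_run foldl_rcons; congr grover_step.
by elim: k amp => //= k IHk amp; rewrite IHk -iterSr.
Qed.

Lemma grover_step_std_real a (u v : R) :
  grover_step a (-1, -1) (u%:C, v%:C) =
  ((- u - 2 * (- u * a + v * (1 - a)))%:C, (v - 2 * (- u * a + v * (1 - a)))%:C).
Proof.
rewrite /grover_step /=; congr pair;
by rewrite !(rmorphB, rmorphD, rmorphM, rmorphN, rmorph1) /=; ring.
Qed.

Definition exact_schedule (a : R) (L : seq (C * C)) : bool :=
  [&& all unit_phase L,
      2^-1 / Num.sqrt a <= 2 * (size L)%:R + 1 <= 9 / Num.sqrt a &
      (grover_run a L (1, 1)).2 * (1 - a)%:C == 0].

Section DoubleAngleRotation.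
Variables s c : R.
Hypotheses (s_gt0 : 0 < s) (c_gt0 : 0 < c) (sc1 : s ^+ 2 + c ^+ 2 = 1).

(* rot2 is the rotation by 2 theta, where sin theta = s and cos theta = c, so that
   grover_pt k = (cos (2k+1) theta, sin (2k+1) theta). *)
Definition rot2 (z : R * R) : R * R :=
  ((c ^+ 2 - s ^+ 2) * z.1 - 2 * s * c * z.2, 2 * s * c * z.1 + (c ^+ 2 - s ^+ 2) * z.2).

Definition grover_pt (k : nat) : R * R := iter k rot2 (c, s).

Lemma grover_ptS k : grover_pt k.+1 = rot2 (grover_pt k).
Proof. by rewrite /grover_pt iterS. Qed.

Lemma c2E : c ^+ 2 = 1 - s ^+ 2.
Proof. by rewrite -sc1 addrAC subrr add0r. Qed.

Lemma grover_pt_norm k : (grover_pt k).1 ^+ 2 + (grover_pt k).2 ^+ 2 = 1.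
Proof.
elim: k => [|k]; first by rewrite /= addrC.
rewrite grover_ptS; case: (grover_pt k) => x y /= IHk.
transitivity ((s ^+ 2 + c ^+ 2) ^+ 2 * (x ^+ 2 + y ^+ 2)); first by ring.
by rewrite sc1 IHk expr1n mulr1.
Qed.

Lemma grover_pt_fst_lb k : c - 2 * s * k%:R <= (grover_pt k).1.
Proof.
elim: k => [|k]; first by rewrite mulr0 subr0.
have := grover_pt_norm k; rewrite grover_ptS -(natr1 k).
case: (grover_pt k) => x y /= xy1 IHk.
(* Cauchy-Schwarz: 2 (1 - (s x + c y)) = (s - x)^2 + (c - y)^2. *)
have sxcy : s * x + c * y <= 1.
  have e : (s - x) ^+ 2 + (c - y) ^+ 2 =
      (s ^+ 2 + c ^+ 2) + (x ^+ 2 + y ^+ 2) - 2 * (s * x + c * y) by ring.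
  rewrite sc1 xy1 in e.
  have := addr_ge0 (sqr_ge0 (s - x)) (sqr_ge0 (c - y)); rewrite e; lra.
have : s * (s * x + c * y) <= s by rewrite ler_piMr // ltW.
rewrite c2E.
have -> : (1 - s ^+ 2 - s ^+ 2) * x - 2 * s * c * y = x - 2 * (s * (s * x + c * y)).
  by ring.
lra.
Qed.

Lemma grover_pt_advance k : 1 / 3 <= c - s ->
  (forall i, (i <= k)%N -> 0 < (grover_pt i).1) ->
  0 < (grover_pt k).2 /\
  k%:R * (2 * s / 3) <= 1 + (grover_pt k).2 - (grover_pt k).1.
Proof.
move=> cs; have cs_gt0 : 0 < c - s by apply: lt_le_trans cs; rewrite divr_gt0.
elim: k => [|k IHk] xpos.
  rewrite /= mul0r; split=> //.
  have c_le1 : c <= 1 by rewrite -(@expr_le1 _ 2 c isT (ltW c_gt0)) -sc1 lerDr sqr_ge0.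
  by have := s_gt0; lra.
have [y_gt0 IH] := IHk (fun i ik => xpos i (leqW ik)).
have := xpos k (leqnSn k); have := grover_pt_norm k.
rewrite grover_ptS -(natr1 k); move: y_gt0 IH.
case: (grover_pt k) => x y /= y_gt0 IH xy1 x_gt0.
have xy_ge1 : 1 <= x + y by nra.
have cs2 : 0 < c ^+ 2 - s ^+ 2.
  by rewrite subr_sqr mulr_gt0 // addr_gt0.
split; first by rewrite addr_gt0 ?mulr_gt0.
have gain : 1 / 3 <= (c + s) * x + (c - s) * y.
  have := mulr_gt0 s_gt0 x_gt0; have := ler_wpM2l (ltW cs_gt0) xy_ge1.
  by rewrite mulr1; nra.
have e : (2 * s * c * x + (c ^+ 2 - s ^+ 2) * y) - ((c ^+ 2 - s ^+ 2) * x - 2 * s * c * y)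
    = y - x + 2 * s * ((c + s) * x + (c - s) * y).
  by rewrite c2E; ring.
have := ler_wpM2l (ltW (mulr_gt0 (ltr0n _ 2) s_gt0)) gain.
lra.
Qed.

Lemma grover_pt_exit_bound k : 1 / 3 <= c - s ->
  (forall i, (i <= k)%N -> 0 < (grover_pt i).1) -> k%:R * s < 3.
Proof.
move=> cs xpos; have [y_gt0 diff] := grover_pt_advance cs xpos.
have := xpos k (leqnn k); have := grover_pt_norm k.
move: y_gt0 diff; case: (grover_pt k) => x y /= *; nra.
Qed.

Lemma grover_pt_exit : 1 / 3 <= c - s -> exists k,
  (forall i, (i <= k)%N -> 0 < (grover_pt i).1) /\ (grover_pt k.+1).1 <= 0.
Proof.
move=> cs.
have [j xj] : exists j, (grover_pt j).1 <= 0.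
  pose J := (Num.trunc (3 / s)).+1.
  case: (boolP [forall i : 'I_J.+1, 0 < (grover_pt i).1]) => [/forallP xpos|].
    have := @grover_pt_exit_bound J cs (fun i iJ => xpos (Ordinal (iJ : (i < J.+1)%N))).
    by rewrite -ltr_pdivlMr // ltNge ltW // truncnS_gt.
  by rewrite negb_forall => /existsP [i xi]; exists i; rewrite leNgt.
case: (ex_minnP (ex_intro (fun j => (grover_pt j).1 <= 0) j xj)) => -[|k].
  by rewrite /= leNgt c_gt0.
move=> xk kmin; exists k; split=> // i ik; rewrite ltNge; apply/negP => /kmin.
by rewrite leqNgt ltnS ik.
Qed.

Lemma grover_iter_std k :
  iter k (grover_step (s ^+ 2) (-1, -1)) (1, 1) =
  (((-1) ^+ k * ((grover_pt k).2 / s))%:C, ((-1) ^+ k * ((grover_pt k).1 / c))%:C).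
Proof.
have [s_neq0 c_neq0] : s != 0 /\ c != 0 by split; apply: lt0r_neq0.
elim: k => [|k IHk]; first by rewrite /= expr0 !mul1r !divff.
rewrite iterS IHk grover_step_std_real grover_ptS [(-1) ^+ k.+1]exprS.
case: (grover_pt k) => x y /=; move: ((-1) ^+ k) => sg.
congr (_%:C, _%:C); apply/eqP; rewrite -subr_eq0; apply/eqP.
  transitivity ((sg * y / s + 2 * sg * x / c) * (s ^+ 2 + c ^+ 2 - 1)).
    by field; rewrite ?c_neq0 ?s_neq0.
  by rewrite sc1 subrr mulr0.
transitivity (sg * x / c * (s ^+ 2 + c ^+ 2 - 1)).
  by field; rewrite ?c_neq0 ?s_neq0.
by rewrite sc1 subrr mulr0.
Qed.

(* With ph.1 = r + i q chosen so that Re E = x / (2 c) for E := ph.1 y s + x c,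
   the phase ph.2 := - E^* / E gives (ph.2 - 1) E = - x / c, which cancels the
   bad amplitude. The hypothesis on x and y says exactly that |r| <= 1. *)
Lemma grover_step_exact (sg x y : R) : 0 <= x -> 0 < y ->
  `|c ^+ 2 - s ^+ 2| * x <= 2 * s * c * y ->
  exists2 ph, unit_phase ph &
    (grover_step (s ^+ 2) ph ((sg * (y / s))%:C, (sg * (x / c))%:C)).2 = 0.
Proof.
move=> x_ge0 y_gt0 xy.
have [s_neq0 c_neq0] : s != 0 /\ c != 0 by split; apply: lt0r_neq0.
have overlapE (ph : C) :
    ph * (sg * (y / s))%:C * (s ^+ 2)%:C + (sg * (x / c))%:C * (1 - s ^+ 2)%:C =
    sg%:C * (ph * (y * s)%:C + (x * c)%:C).
  rewrite -c2E -mulrA -rmorphM (_ : _ * s ^+ 2 = sg * (y * s)); last by field.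
  by rewrite -rmorphM (_ : _ * c ^+ 2 = sg * (x * c)); [rewrite !rmorphM; ring | field].
have [->|x_neq0] := eqVneq x 0.
  exists (1, 1); first by rewrite /unit_phase /= normr1 eqxx.
  by rewrite /grover_step /= subrr !mul0r mulr0 addr0.
have x_gt0 : 0 < x by rewrite lt_neqAle eq_sym x_neq0.
set r := - (c ^+ 2 - s ^+ 2) * x / (2 * s * c * y).
have den_gt0 : 0 < 2 * s * c * y by rewrite !mulr_gt0.
have r2_le1 : r ^+ 2 <= 1.
  have r_le1 : `|r| <= 1.
    rewrite /r !normrM normrN normfV (gtr0_norm den_gt0) (ger0_norm x_ge0).
    by rewrite ler_pdivrMr // mul1r.
  by rewrite -(ger0_norm (sqr_ge0 r)) normrX expr_le1.
set q := Num.sqrt (1 - r ^+ 2).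
set E : C := Complex (r * (y * s) + x * c) (q * (y * s)).
have ReE : r * (y * s) + x * c = x / c / 2.
  transitivity (x / c / 2 * (s ^+ 2 + c ^+ 2)); last by rewrite sc1 mulr1.
  by rewrite /r; field; rewrite ?c_neq0 ?s_neq0 ?lt0r_neq0.
have E_neq0 : E != 0.
  apply/eqP => /(congr1 (@complex.Re R)) /=; rewrite ReE => /eqP.
  by rewrite gt_eqF // !divr_gt0.
have EJ : E + E^* = (x / c)%:C.
  rewrite /E; simpc; rewrite ReE; apply/eqP; rewrite eq_complex /= eqxx andbT.
  by apply/eqP; field.
exists (Complex r q, - E^* / E).
  rewrite /unit_phase /= normf_div normrN normcJ divff ?normr_eq0 // eqxx andbT.
  by rewrite normc_def /= sqr_sqrtr ?subr_ge0 // addrC subrK sqrtr1.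
rewrite /grover_step /= overlapE.
have -> : Complex r q * (y * s)%:C + (x * c)%:C = E by rewrite /E; simpc.
have -> : (- E^* / E - 1) * (sg%:C * E) = - sg%:C * (E + E^*) by field.
by rewrite EJ rmorphM /= mulNr addrC addNr.
Qed.

Lemma grover_run_exact k : 0 <= (grover_pt k).1 -> 0 < (grover_pt k).2 ->
  `|c ^+ 2 - s ^+ 2| * (grover_pt k).1 <= 2 * s * c * (grover_pt k).2 ->
  exists2 ph, unit_phase ph &
    (grover_run (s ^+ 2) (rcons (nseq k (-1, -1)) ph) (1, 1)).2 = 0.
Proof.
move=> x_ge0 y_gt0 xy; have [ph ph1 ph2] := grover_step_exact ((-1) ^+ k) x_ge0 y_gt0 xy.
by exists ph; rewrite // grover_run_rcons_nseq grover_iter_std.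
Qed.

Lemma exact_schedule_large : 1 / 4 <= s ^+ 2 -> exists L, exact_schedule (s ^+ 2) L.
Proof.
move=> s2_ge.
have s_ge : 1 / 2 <= s by have := s_gt0; nra.
have s_le1 : s <= 1 by have c2 := sqr_ge0 c; have := s_gt0; have := sc1; nra.
have cs : `|c ^+ 2 - s ^+ 2| * c <= 2 * s * c * s.
  rewrite (_ : 2 * s * c * s = 2 * s ^+ 2 * c); last by ring.
  apply: ler_wpM2r; first exact: ltW.
  by rewrite ler_norml c2E; apply/andP; split; lra.
have [ph ph_unit ph_exact] := @grover_run_exact 0 (ltW c_gt0) s_gt0 cs.
exists (rcons (nseq 0 (-1, -1)) ph).
rewrite /exact_schedule ph_exact mul0r eqxx andbT /= ph_unit.
rewrite sqrtr_sqr gtr0_norm // ler_pdivrMr // ler_pdivlMr //=.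
by apply/andP; split; lra.
Qed.

Lemma exact_schedule_small : s ^+ 2 < 1 / 4 -> exists L, exact_schedule (s ^+ 2) L.
Proof.
move=> s2_lt.
have s_lt : s < 1 / 2 by have := s_gt0; nra.
have cs : 1 / 3 <= c - s by have := c_gt0; have := sc1; nra.
have c_ge : 1 / 2 <= c by have := c_gt0; have := sc1; nra.
have [k [xpos xk1]] := grover_pt_exit cs.
have [yk _] := grover_pt_advance cs xpos.
have xk := xpos k (leqnn k).
have cond : `|c ^+ 2 - s ^+ 2| * (grover_pt k).1 <= 2 * s * c * (grover_pt k).2.
  move: xk1; rewrite grover_ptS; case: (grover_pt k) => x y /= xk1.
  by rewrite ger0_norm; [lra | rewrite c2E; lra].
have [ph ph_unit ph_exact] := grover_run_exact (ltW xk) yk cond.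
exists (rcons (nseq k (-1, -1)) ph).
rewrite /exact_schedule ph_exact mul0r eqxx andbT all_rcons ph_unit all_nseq /=.
rewrite /unit_phase /= normrN normr1 eqxx orbT size_rcons size_nseq sqrtr_sqr gtr0_norm //.
rewrite ler_pdivrMr // ler_pdivlMr // -(natr1 k).
have ks := grover_pt_exit_bound cs xpos.
have := grover_pt_fst_lb k.+1; rewrite -(natr1 k) => lb.
have s0 := s_gt0; by apply/and3P; split=> //; lra.
Qed.

End DoubleAngleRotation.

Lemma exact_schedule_exists (a : R) : 0 < a <= 1 -> exists L, exact_schedule a L.
Proof.
case/andP=> a_gt0; rewrite le_eqVlt => /orP[/eqP -> | a_lt1].
  exists [::]; rewrite /exact_schedule /= sqrtr1 !divr1 subrr mul1r eqxx andbT.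
  by apply/andP; split; lra.
have s_gt0 : 0 < Num.sqrt a by rewrite sqrtr_gt0.
have c_gt0 : 0 < Num.sqrt (1 - a) by rewrite sqrtr_gt0 subr_gt0.
have sc1 : Num.sqrt a ^+ 2 + Num.sqrt (1 - a) ^+ 2 = 1.
  by rewrite !sqr_sqrtr ?subr_ge0 ?ltW // addrC subrK.
rewrite -(sqr_sqrtr (ltW a_gt0)).
have [|] := leP (1 / 4) (Num.sqrt a ^+ 2).
  exact: exact_schedule_large s_gt0 c_gt0 sc1.
exact: exact_schedule_small s_gt0 c_gt0 sc1.
Qed.

Definition schedule_spec (a : R) (L : seq (C * C)) : bool :=
  (0 < a <= 1) ==> exact_schedule a L.

Lemma schedule_spec_exists (a : R) : exists L, schedule_spec a L.
Proof.
have [/exact_schedule_exists[L hL] | a_out] := boolP (0 < a <= 1).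
  by exists L; rewrite /schedule_spec hL implybT.
by exists [::]; rewrite /schedule_spec (negPf a_out).
Qed.

Definition grover_schedule (a : R) : seq (C * C) := xchoose (schedule_spec_exists a).

Lemma grover_scheduleP (a : R) : 0 < a <= 1 -> exact_schedule a (grover_schedule a).
Proof. by move=> a_in; apply: (implyP (xchooseP (schedule_spec_exists a))). Qed.

End AmplitudeDynamics.
Arguments unit_phase {R} ph.

Section GroverCircuit.
Local Open Scope sesquilinear_scope.
Variables (R : realType) (n : nat).
Local Notation C := R[i].
Implicit Types (u v w : 'cV[C]_n.+1) (L : seq (C * C)).

Definition grover_blk (ph : C * C) : seq (gate R n) :=
  [:: @GSchi R n ph.1; @GAinv R n; @GS0 R n ph.2; @GA R n].

Definition grover_circuit L : seq (gate R n) := @GA R n :: flatten (map grover_blk L).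

Lemma grover_circuit_ok L : all unit_phase L -> circuit_ok (grover_circuit L).
Proof.
move=> L_unit; split=> //; elim: L L_unit => //= ph L IHL.
by case/andP=> /andP[/eqP ph1 /eqP ph2] /IHL.
Qed.

Lemma cost_grover_circuit L : cost (grover_circuit L) = (size L).*2.+1.
Proof. by rewrite /cost /=; congr S; elim: L => //= ph L ->. Qed.

Definition inner u v : C := (u ^t* *m v) 0 0.

Lemma innerE u v : inner u v = \sum_i (u i 0)^* * v i 0.
Proof. by rewrite /inner !mxE; apply: eq_bigr => i _; rewrite !mxE. Qed.

Lemma inner_unitary (U : 'M[C]_n.+1) v :
  U \is unitarymx -> inner (U *m v) (U *m v) = inner v v.
Proof. by move=> U_unit; rewrite /inner trmx_mul map_mxM mulmxA mulmxKtV. Qed.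

Lemma inner_ket0l v : inner (ket0 R n) v = v ord0 0.
Proof. by rewrite /inner /ket0 trmx_delta map_delta_mx -rowE mxE. Qed.

Lemma inner_ket0 : inner (ket0 R n) (ket0 R n) = 1.
Proof. by rewrite inner_ket0l /ket0 mxE. Qed.

Lemma diag_unitary (d : 'rV[C]_n.+1) :
  (forall i, `|d 0 i| = 1) -> diag_mx d \is unitarymx.
Proof.
move=> d_unit; apply/unitarymxP/matrixP => i j.
rewrite mul_diag_mx !mxE eq_sym.
have [<-|_] := eqVneq j i; last by rewrite !mulr0n rmorph0 mulr0.
by rewrite !mulr1n -normCK d_unit expr1n.
Qed.

Lemma gate_unitary chi A (g : gate R n) :
  A \is unitarymx -> gate_ok g -> gate_mx chi A g \is unitarymx.
Proof.
move=> A_unit; case: g => [| |ph|ph|U] g_ok.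
- exact: A_unit.
- by rewrite [gate_mx _ _ _]/= (invmx_unitary A_unit) trmxC_unitary.
- by apply: diag_unitary => i; rewrite mxE; case: ifP => _; [exact: g_ok | rewrite normr1].
- by apply: diag_unitary => i; rewrite mxE; case: ifP => _; [exact: g_ok | rewrite normr1].
- exact: g_ok.
Qed.

Lemma inner_run chi A (s : seq (gate R n)) v :
  A \is unitarymx -> circuit_ok s -> inner (run chi A s v) (run chi A s v) = inner v v.
Proof.
move=> A_unit; elim: s v => [//|g s IHs] v [g_ok s_ok].
by rewrite /= IHs // (inner_unitary _ (gate_unitary chi A_unit g_ok)).
Qed.

Lemma S_0_mulmx ph u : S_0 n ph *m u = u + ((ph - 1) * u ord0 0) *: ket0 R n.
Proof.
apply/matrixP => i j; rewrite /S_0 mul_diag_mx !mxE (ord1 j).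
by case: ifP => [/eqP ->|_]; rewrite ?eqxx /=; ring.
Qed.

Section Amplitudes.
Variables (chi : int -> bool) (A : 'M[C]_n.+1).
Hypothesis A_unitary : A \is unitarymx.
Local Notation bad_prob := (good_prob (fun z => ~~ chi z)).
Local Notation psi := (A *m ket0 R n).

(* The states mix al be psi form the plane left invariant by every Grover block. *)
Definition mix (al be : C) v : 'cV[C]_n.+1 :=
  \col_x ((if chi (nat_of_ord x)%:Z then al else be) * v x 0).

Lemma mix11 v : mix 1 1 v = v.
Proof. by apply/matrixP => i j; rewrite mxE (ord1 j); case: ifP; rewrite mul1r. Qed.

Lemma S_chi_mix ph al be v : S_chi n chi ph *m mix al be v = mix (ph * al) be v.
Proof.
apply/matrixP => i j; rewrite /S_chi mul_diag_mx !mxE.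
by case: ifP; rewrite ?mul1r // mulrA.
Qed.

Lemma mix_addZ al be g v : mix al be v + g *: v = mix (al + g) (be + g) v.
Proof. by apply/matrixP => i j; rewrite !mxE (ord1 j); case: ifP; rewrite mulrDl. Qed.

Lemma inner_mix al be v :
  inner v (mix al be v) = al * good_prob chi v + be * bad_prob v.
Proof.
rewrite innerE /good_prob !mulr_sumr (bigID (fun i : 'I_n.+1 => chi i%:Z)) /=.
congr (_ + _); apply: eq_bigr => i chi_i; rewrite mxE normCK.
  by rewrite chi_i; ring.
by rewrite (negPf chi_i); ring.
Qed.

Lemma inner_self v : inner v v = good_prob chi v + bad_prob v.
Proof. by rewrite -[in X in inner _ X](mix11 v) inner_mix !mul1r. Qed.

Lemma bad_prob_mix al be v : bad_prob (mix al be v) = `|be| ^+ 2 * bad_prob v.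
Proof.
rewrite /good_prob mulr_sumr; apply: eq_bigr => i /negPf chi_i.
by rewrite mxE chi_i normrM exprMn.
Qed.

Lemma inner_psi : inner psi psi = 1.
Proof. by rewrite inner_unitary // inner_ket0. Qed.

Lemma reflect_psi ph w :
  A *m (S_0 n ph *m (invmx A *m w)) = w + ((ph - 1) * inner psi w) *: psi.
Proof.
rewrite S_0_mulmx mulmxDr -scalemxAr mulmxA mulmxV ?unitarymx_unit // mul1mx.
by rewrite /inner trmx_mul map_mxM -mulmxA -inner_ket0l invmx_unitary.
Qed.

Variable a : R.
Hypothesis good_psi : good_prob chi psi = a%:C.

Lemma bad_prob_psi : bad_prob psi = (1 - a)%:C.
Proof.
have -> : (1 - a)%:C = 1 - a%:C by rewrite rmorphB rmorph1.
by rewrite -good_psi -inner_psi inner_self addrAC subrr add0r.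
Qed.

Lemma good_prob_le1 : a <= 1.
Proof.
rewrite -subr_ge0 -ler0c -bad_prob_psi.
by apply: sumr_ge0 => i _; rewrite exprn_ge0.
Qed.

Lemma run_grover_blk ph al be :
  run chi A (grover_blk ph) (mix al be psi) =
  mix (grover_step a ph (al, be)).1 (grover_step a ph (al, be)).2 psi.
Proof. by rewrite /= S_chi_mix reflect_psi inner_mix good_psi bad_prob_psi mix_addZ. Qed.

Lemma run_grover_blks L al be :
  run chi A (flatten (map grover_blk L)) (mix al be psi) =
  mix (grover_run a L (al, be)).1 (grover_run a L (al, be)).2 psi.
Proof.
elim: L al be => [//|ph L IHL] al be.
rewrite -[LHS]/(run chi A _ (run chi A (grover_blk ph) (mix al be psi))) run_grover_blk.
rewrite -[grover_run a (ph :: L) _]/(grover_run a L (grover_step a ph (al, be))).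
by case: grover_step => al' be'; exact: IHL.
Qed.

Lemma good_prob_grover_circuit L : all unit_phase L ->
  (grover_run a L (1, 1)).2 * (1 - a)%:C = 0 ->
  good_prob chi (run chi A (grover_circuit L) (ket0 R n)) = 1.
Proof.
move=> L_unit exact_L.
have run_mix : run chi A (grover_circuit L) (ket0 R n) =
    mix (grover_run a L (1, 1)).1 (grover_run a L (1, 1)).2 psi.
  by rewrite /= -run_grover_blks mix11.
have norm1 := @inner_run chi A _ (ket0 R n) A_unitary (grover_circuit_ok L_unit).
rewrite inner_ket0 inner_self run_mix bad_prob_mix bad_prob_psi in norm1.
have bad0 : `|(grover_run a L (1, 1)).2| ^+ 2 * (1 - a)%:C = 0.
  by rewrite normCK mulrAC exact_L mul0r.
by rewrite run_mix; move: norm1; rewrite bad0 addr0.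
Qed.

End Amplitudes.
End GroverCircuit.

Theorem theorem3 (R : realType) :
  exists (c1 c2 : R), 0 < c1 /\ 0 < c2 /\
  exists alg : forall n : nat, R -> seq (gate R n),
    (forall (n : nat) (a : R), 0 < a <= 1 ->
       circuit_ok (alg n a) /\
       c1 / Num.sqrt a <= (cost (alg n a))%:R <= c2 / Num.sqrt a) /\
    (forall (n : nat) (chi : int -> bool) (A : 'M[R[i]]_(n.+1)) (a : R),
       A \is unitarymx ->
       good_prob chi (A *m ket0 R n) = a%:C ->
       0 < a ->
       good_prob chi (run chi A (alg n a) (ket0 R n)) = 1).
Proof.
exists 2^-1, 9; split; first by rewrite invr_gt0.
split=> //.
exists (fun n a => grover_circuit n (grover_schedule a)); split.
  move=> n a a_in; have /and3P[L_unit cost_bd _] := grover_scheduleP a_in.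
  split; first exact: grover_circuit_ok.
  rewrite cost_grover_circuit.
  have -> : ((size (grover_schedule a)).*2.+1)%:R = 2 * (size (grover_schedule a))%:R + 1 :> R.
    by rewrite -natr1 -muln2 natrM mulrC.
  exact: cost_bd.
move=> n chi A a A_unit good_psi a_gt0.
have a_in : 0 < a <= 1 by rewrite a_gt0 (good_prob_le1 A_unit good_psi).
have /and3P[L_unit _ /eqP exact_L] := grover_scheduleP a_in.
exact: (good_prob_grover_circuit A_unit good_psi L_unit exact_L).
Qed.
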